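(* Let $G$ be a scheduling game on $m$ identical machines of speed $1$ in which every job $i$ has processing-time function $p_i(t)=b_i+at$ with $b_i\ge0$ and a common rate $a>0$, and in which all machines use the SBPT (Shortest Basic Processing Time) global priority list, i.e. jobs are ordered in non-decreasing order of $b_i$ (ties broken arbitrarily). Then every pure Nash equilibrium $\sigma$ of $G$ minimizes the total processing time: $\sum_{i\in N}p_i(S_i(\sigma))\le\sum_{i\in N}p_i(S_i(\sigma'))$ for every profile $\sigma'$ of $G$.
   Context: Scheduling game: a finite set $N$ of $n$ jobs (players) and a set $M$ of $m$ machines; machine $j$ has speed $s_j>0$. With a global priority list, all machines share the same bijection $\pi:N\to\{1,\dots,n\}$, and job $u$ has higher priority than $v$ iff $\pi(u)<\pi(v)$. A profile $\sigma\in M^N$ assigns each job to a machine. On machine $j$, the jobs assigned to it, listed in increasing $\pi$-order as $i_1,i_2,\dots$, are processed without idle time: $S_{i_1}(\sigma)=0$, $C_{i_k}(\sigma)=S_{i_k}(\sigma)+p_{i_k}(S_{i_k}(\sigma))/s_j$, $S_{i_{k+1}}(\sigma)=C_{i_k}(\sigma)$. The cost of job $i$ is $C_i(\sigma)$. A pure Nash equilibrium (NE) is a profile in which no job can strictly decrease its completion time by unilaterally changing its machine. *)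

From HB Require Import structures.
From mathcomp Require Import all_boot all_order all_algebra.
Set Implicit Arguments. Unset Strict Implicit. Unset Printing Implicit Defensive.
Import Order.TTheory GRing.Theory Num.Theory.
Local Open Scope ring_scope.

Section Sched.
Variables (R : realFieldType) (N M : finType).
Variables (s : M -> R) (p : N -> R -> R) (pi : N -> 'I_#|N|).

Definition jobs_on (sigma : N -> M) (j : M) : seq N :=
  sort (fun u v => (pi u <= pi v)%N) (enum [pred i | sigma i == j]).

Fixpoint start_in (sj t : R) (l : seq N) (i : N) : R :=
  match l with
  | [::] => 0
  | k :: l' => if k == i then t else start_in sj (t + p k t / sj) l' i
  end.

Definition start (sigma : N -> M) (i : N) : R :=
  start_in (s (sigma i)) 0 (jobs_on sigma (sigma i)) i.

Definition completion (sigma : N -> M) (i : N) : R :=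
  start sigma i + p i (start sigma i) / s (sigma i).

Definition deviate (sigma : N -> M) (i : N) (j : M) : N -> M :=
  fun k => if k == i then j else sigma k.

Definition is_NE (sigma : N -> M) : Prop :=
  forall (i : N) (j : M), completion sigma i <= completion (deviate sigma i j) i.

Definition total_processing (sigma : N -> M) : R :=
  \sum_(i : N) p i (start sigma i).

End Sched.

From HB Require Import structures.
From mathcomp Require Import all_boot all_order all_algebra.
From mathcomp Require Import ring lra zify.
Set Implicit Arguments. Unset Strict Implicit. Unset Printing Implicit Defensive.
Import Order.TTheory GRing.Theory Num.Theory.
Local Open Scope ring_scope.

(* With unit speeds and p_i(t) = b_i + a t, a job started at time x completes
   at b_i + q x, where q = 1 + a; hence the total processing time is the sum of
   the final machine loads, and every load is linear in the vector b.  Since b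
   is nondecreasing along the SBPT list, it is a nonnegative combination of the
   threshold vectors [t <= position of k], whose coefficients are the jumps of
   b along the list.  For the threshold t a machine carrying c jobs of position
   >= t has load 1 + q + ... + q^(c-1), a convex function of c, and the number
   of such jobs does not depend on the profile; so every profile spreading them
   evenly over the machines minimizes this part of the total.  An equilibrium
   does so at every strict jump of b: each job joins a machine of minimal load,
   and induction along the list shows that, from position t on, a machine with
   fewer suffix jobs is always strictly less loaded than one with more. *)

Section GeometricSum.
Variables (R : realDomainType) (q : R).
Hypothesis q_ge1 : 1 <= q.

Definition geom (c : nat) : R := \sum_(i < c) q ^+ i.

Lemma geom0 : geom 0 = 0.
Proof. by rewrite /geom big_ord0. Qed.

Lemma geomS c : geom c.+1 = geom c + q ^+ c.
Proof. by rewrite /geom big_ord_recr. Qed.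

Lemma geomSl c : geom c.+1 = 1 + q * geom c.
Proof.
rewrite /geom big_ord_recl expr0 mulr_sumr.
by congr (_ + _); apply: eq_bigr => i _; rewrite exprS.
Qed.

Lemma geom_addn_ge K d : geom K + d%:R * q ^+ K <= geom (K + d).
Proof.
elim: d => [|d IH]; first by rewrite mul0r addr0 addn0.
rewrite addnS geomS -natr1 mulrDl mul1r addrA.
by apply: lerD => //; apply: ler_weXn2l => //; exact: leq_addr.
Qed.

Lemma geom_addn_le c d : geom (c + d) <= geom c + d%:R * q ^+ (c + d).
Proof.
elim: d => [|d IH]; first by rewrite mul0r addr0 addn0.
rewrite addnS geomS -natr1 mulrDl mul1r addrA.
have qX_le : q ^+ (c + d) <= q ^+ (c + d).+1 by apply: ler_weXn2l.
apply: lerD => //; apply: (le_trans IH); apply: lerD => //.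
by apply: ler_wpM2l; first exact: ler0n.
Qed.

Lemma geom_tangent K c : geom K + q ^+ K * (c%:R - K%:R) <= geom c.
Proof.
case: (leqP K c) => [leKc|/ltnW lecK].
  by have := geom_addn_ge K (c - K); rewrite subnKC // natrB // mulrC.
have := geom_addn_le c (K - c); rewrite subnKC // natrB //.
rewrite mulrBr (mulrC _ c%:R) (mulrC _ K%:R) mulrBl; lra.
Qed.

Lemma sum_geom_balanced_le (M : finType) (u v : M -> nat) :
  (forall A B, (u A <= (u B).+1)%N) -> (\sum_j u j = \sum_j v j)%N ->
  \sum_j geom (u j) <= \sum_j geom (v j).
Proof.
move=> u_bal sum_uv.
case: (pickP (@predT M)) => [j0 _|M0]; last first.
  by rewrite !big_pred0 // => j; have := M0 j.
have [j1 _ u_min] := arg_minnP u (isT : predT j0).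
set K := u j1.
have geom_u j : geom (u j) = geom K + q ^+ K * ((u j)%:R - K%:R).
  have /andP[leKu leuK1] : (K <= u j <= K.+1)%N by rewrite u_min ?u_bal.
  case: (ltngtP (u j) K.+1) leuK1 => // [ltuK1 _ | -> _].
    have -> : u j = K by apply/eqP; rewrite eqn_leq leKu -ltnS ltuK1.
    by rewrite subrr mulr0 addr0.
  by rewrite geomS -natr1 addrAC subrr add0r mulr1.
rewrite (eq_bigr _ (fun j _ => geom_u j)).
have -> : \sum_j (geom K + q ^+ K * ((u j)%:R - K%:R)) =
          \sum_j (geom K + q ^+ K * ((v j)%:R - K%:R)).
  by rewrite !big_split /= -!mulr_sumr !sumrB -!natr_sum sum_uv.
by apply: ler_sum => j _; exact: geom_tangent.
Qed.

End GeometricSum.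

Section SBPT.
Variables (R : realFieldType) (N M : finType) (a : R) (b : N -> R)
  (pi : N -> 'I_#|N|) (g : 'I_#|N| -> N).
Hypotheses (piK : cancel pi g) (gK : cancel g pi) (a_gt0 : 0 < a)
  (b_ge0 : forall i, 0 <= b i)
  (b_mono : forall u v, (pi u < pi v)%N -> b u <= b v).

Local Notation n := #|N|.
Local Notation q := (1 + a).
Local Notation proc := (fun i t => b i + a * t).
Local Notation ordered := (fun u v : N => (pi u <= pi v)%N).

Definition job_at (t : nat) : option N := omap g (insub t).

Lemma job_at_val {t k} : job_at t = Some k -> pi k = t :> nat.
Proof. by rewrite /job_at; case: insubP => [o _ <-|] //= [<-]; rewrite gK. Qed.

Lemma job_at_pi k : job_at (pi k) = Some k.
Proof. by rewrite /job_at valK /= piK. Qed.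

Lemma job_at_ord (o : 'I_n) : job_at o = Some (g o).
Proof. by rewrite /job_at valK. Qed.

Lemma job_at_lt {tau} : (tau < n)%N -> exists k, job_at tau = Some k.
Proof. by move=> lttau; exists (g (Ordinal lttau)); exact: (job_at_ord (Ordinal lttau)). Qed.

Lemma job_at_None {t} : job_at t = None -> forall k, pi k != t :> nat.
Proof. by move=> Et k; apply/eqP => ekt; rewrite -ekt job_at_pi in Et. Qed.

Lemma eq_pi u v : (pi u == pi v :> nat) = (u == v).
Proof. by apply/eqP/eqP => [/val_inj/(can_inj piK)|->]. Qed.

Lemma sorted_jobs_on (s : N -> M) j : sorted ordered (jobs_on pi s j).
Proof. by apply: sort_sorted => u v; exact: leq_total. Qed.

Lemma mem_jobs_on (s : N -> M) j k : (k \in jobs_on pi s j) = (s k == j).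
Proof. by rewrite /jobs_on mem_sort mem_enum inE. Qed.

Lemma uniq_jobs_on (s : N -> M) j : uniq (jobs_on pi s j).
Proof. by rewrite /jobs_on sort_uniq enum_uniq. Qed.

Lemma filter_pi_ltS (l : seq N) t : sorted ordered l ->
  [seq k <- l | (pi k < t.+1)%N] =
  [seq k <- l | (pi k < t)%N] ++ [seq k <- l | pi k == t :> nat].
Proof.
elim: l => //= x l IH sorted_xl.
have /allP x_min := order_path_min (fun u v w => @leq_trans (pi u) (pi v) (pi w)) sorted_xl.
rewrite IH ?(path_sorted sorted_xl) //.
case: (ltngtP (pi x) t) => [ltxt|lttx|ext]; first by rewrite ltnS ltnW.
  by rewrite ltnS leqNgt lttx.
rewrite ext ltnSn (@eq_in_filter _ _ pred0) ?filter_pred0 // => y /x_min /=.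
by rewrite ext ltnNge => ->.
Qed.

Lemma filter_jobs_on_pi_eq (s : N -> M) j t :
  [seq k <- jobs_on pi s j | pi k == t :> nat] =
  if job_at t is Some k then (if s k == j then [:: k] else [::]) else [::].
Proof.
case Et: (job_at t) => [k|]; last first.
  by rewrite (@eq_in_filter _ _ pred0) ?filter_pred0 // => k _ /=; exact/negbTE/job_at_None.
rewrite (@eq_filter _ _ (pred1 k)) => [|k' /=]; last by rewrite -(job_at_val Et) eq_pi.
case: ifP => skj; first by rewrite filter_pred1_uniq ?uniq_jobs_on ?mem_jobs_on.
rewrite (@eq_in_filter _ _ pred0) ?filter_pred0 // => k'.
by rewrite mem_jobs_on /= => /eqP sk'j; apply/eqP => ek; rewrite -ek sk'j eqxx in skj.
Qed.

Lemma start_in_foldl (p : N -> R -> R) sj l i x : sorted ordered l -> i \in l ->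
  start_in p sj x l i = foldl (fun t k => t + p k t / sj) x [seq k <- l | (pi k < pi i)%N].
Proof.
elim: l x => //= k l IH x sorted_kl.
have /allP k_min := order_path_min (fun u v w => @leq_trans (pi u) (pi v) (pi w)) sorted_kl.
have [<- _|neki] := eqVneq k i.
  rewrite ltnn (@eq_in_filter _ _ pred0) ?filter_pred0 // => y /k_min /=.
  by rewrite ltnNge => ->.
rewrite in_cons eq_sym (negbTE neki) /= => il.
have ltki : (pi k < pi i)%N by rewrite ltn_neqAle eq_pi neki k_min.
by rewrite ltki /= IH ?(path_sorted sorted_kl).
Qed.

Lemma big_pi_eq (V : nmodType) t (P : pred N) (F : N -> V) :
  \sum_(i | P i && (pi i == t :> nat)) F i =
  if job_at t is Some k then (if P k then F k else 0) else 0.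
Proof.
case Et: (job_at t) => [k|]; last first.
  by rewrite big_pred0 // => i; rewrite (negbTE (job_at_None Et i)) andbF.
have eq_k i : (pi i == t :> nat) = (i == k) by rewrite -(job_at_val Et) eq_pi.
case Pk: (P k).
  by rewrite (big_pred1 k) // => i /=; rewrite eq_k; case: eqP => [->|]; rewrite ?Pk ?andbF.
by rewrite big_pred0 // => i; rewrite eq_k; case: eqP => [->|]; rewrite ?Pk ?andbF.
Qed.

(* Completion time of the last job of machine [j] among positions [< t],
   with basic processing times [w] in place of [b]. *)
Fixpoint load (w : N -> R) (s : N -> M) (j : M) (t : nat) : R :=
  if t is t'.+1 then
    if job_at t' is Some k then
      (if s k == j then w k + q * load w s j t' else load w s j t')
    else load w s j t'
  else 0.

Lemma load_foldl (s : N -> M) j t :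
  load b s j t = foldl (fun x k => x + proc k x / 1) 0 [seq k <- jobs_on pi s j | (pi k < t)%N].
Proof.
elim: t => [|t IH].
  by rewrite (@eq_filter _ _ pred0) ?filter_pred0 // => k; rewrite ltn0.
rewrite filter_pi_ltS ?sorted_jobs_on // foldl_cat -IH filter_jobs_on_pi_eq /=.
by case: (job_at t) => [k|] //; case: ifP => //= _; rewrite divr1; ring.
Qed.

Lemma start_load (s : N -> M) i : start (fun=> 1) proc pi s i = load b s (s i) (pi i).
Proof. by rewrite /start start_in_foldl ?sorted_jobs_on ?mem_jobs_on // load_foldl. Qed.

Lemma load_sum (s : N -> M) j t :
  load b s j t = \sum_(i | (s i == j) && (pi i < t)%N) (b i + a * load b s j (pi i)).
Proof.
elim: t => [|t IH]; first by rewrite big_pred0 // => i; rewrite ltn0 andbF.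
rewrite (bigID (fun i => pi i == t :> nat)) /=.
rewrite (eq_bigl (fun i => (s i == j) && (pi i == t :> nat))); last first.
  by move=> i; case: (@eqP nat (pi i) t) => [->|]; rewrite ?ltnSn ?andbT ?andbF.
rewrite [X in _ = _ + X](eq_bigl (fun i => (s i == j) && (pi i < t)%N)); last first.
  move=> i; rewrite ltnS leq_eqVlt.
  by case: (@eqP nat (pi i) t) => [->|]; rewrite ?ltnn ?andbF ?andbT.
rewrite big_pi_eq -IH.
case Et: (job_at t) => [k|] /=; last by rewrite add0r.
by rewrite (job_at_val Et); case: ifP => _; [ring | rewrite add0r].
Qed.

Lemma total_processing_load (s : N -> M) :
  total_processing (fun=> 1) proc pi s = \sum_j load b s j n.
Proof.
rewrite /total_processing (partition_big s predT) //.
apply: eq_bigr => j _; rewrite load_sum.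
apply: eq_big => [i|i]; first by rewrite ltn_ord andbT.
by move=> /andP[_ /eqP <-]; rewrite start_load.
Qed.

Lemma eq_load_prefix w (s s' : N -> M) j t :
  (forall k, (pi k < t)%N -> s k = s' k) -> load w s j t = load w s' j t.
Proof.
elim: t => [//|t IH] eq_ss' /=.
rewrite IH => [|k ltkt]; last by apply: eq_ss'; rewrite ltnS ltnW.
by case Et: (job_at t) => [k|] //; rewrite eq_ss' // (job_at_val Et) ltnSn.
Qed.

Lemma load_ge0 (s : N -> M) j t : 0 <= load b s j t.
Proof.
elim: t => //= t IH; case: (job_at t) => // k; case: ifP => // _.
by rewrite addr_ge0 ?mulr_ge0 // addr_ge0 // ltW.
Qed.

Lemma NE_load_min {s : N -> M} : is_NE (fun=> 1) proc pi s ->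
  forall i j, load b s (s i) (pi i) <= load b s j (pi i).
Proof.
move=> s_NE i j; have := s_NE i j.
rewrite /completion !start_load /deviate eqxx !divr1.
rewrite (@eq_load_prefix b (fun k => if k == i then j else s k) s); last first.
  by move=> k ltki; case: eqP => // eki; rewrite eki ltnn in ltki.
have q_gt0 : 0 < q by rewrite ltr_wpDr ?ltW.
by move=> le_completion; rewrite -subr_ge0 -(pmulr_rge0 _ q_gt0) mulrBr !mulrDl !mul1r; lra.
Qed.

Fixpoint suffix_count (s : N -> M) (t : nat) (j : M) (tau : nat) : nat :=
  if tau is tau'.+1 then
    if job_at tau' is Some k then
      (if (s k == j) && (t <= tau')%N then (suffix_count s t j tau').+1
       else suffix_count s t j tau')
    else suffix_count s t j tau'
  else 0.

Lemma suffix_count_small s t j tau : (tau <= t)%N -> suffix_count s t j tau = 0%N.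
Proof.
elim: tau => //= tau IH letau_t.
have -> : (t <= tau)%N = false by apply/negbTE; rewrite -ltnNge.
by case: (job_at tau) => [k|]; rewrite ?andbF IH // ltnW.
Qed.

Lemma sum_suffix_countS s t tau :
  (\sum_j suffix_count s t j tau.+1 =
   \sum_j suffix_count s t j tau + if job_at tau is Some _ then (t <= tau : nat) else 0)%N.
Proof.
rewrite /=; case: (job_at tau) => [k|]; last by rewrite addn0.
rewrite (eq_bigr (fun j => suffix_count s t j tau + ((s k == j) && (t <= tau)%N : nat))%N);
  last by move=> j _; case: ifP => _; rewrite ?addn1 ?addn0.
rewrite big_split /=; congr (_ + _)%N.
rewrite (bigD1 (s k)) //= eqxx /= big1 ?addn0 // => j /negbTE.
by rewrite eq_sym => ->.
Qed.

Lemma eq_sum_suffix_count s s' t tau :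
  (\sum_j suffix_count s t j tau = \sum_j suffix_count s' t j tau)%N.
Proof.
elim: tau => [|tau IH]; first by rewrite !big1.
by rewrite !sum_suffix_countS IH.
Qed.

Lemma load_lin w (c : 'I_n -> R) (ws : 'I_n -> N -> R) s j tau :
  (forall k, w k = \sum_t c t * ws t k) ->
  load w s j tau = \sum_t c t * load (ws t) s j tau.
Proof.
move=> w_lin; elim: tau => [|tau IH] /=; first by rewrite big1 // => t _; rewrite mulr0.
rewrite IH; case: (job_at tau) => [k|] //; case: ifP => _ //.
by rewrite w_lin mulr_sumr -big_split; apply: eq_bigr => t _ /=; ring.
Qed.

Definition threshold (t : nat) (k : N) : R := if (t <= pi k)%N then 1 else 0.

Lemma load_threshold s t j tau :
  load (threshold t) s j tau = geom q (suffix_count s t j tau).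
Proof.
elim: tau => /= [|tau IH]; first by rewrite geom0.
case Etau: (job_at tau) => [k|] //; case: eqP => _ //=.
rewrite /threshold (job_at_val Etau) IH.
case: (leqP t tau) => [_|lttau] /=; first by rewrite geomSl.
by rewrite suffix_count_small ?(ltnW lttau) // geom0 mulr0 addr0.
Qed.

Definition b_at (t : nat) : R := if job_at t is Some k then b k else 0.
Definition b_before (t : nat) : R := if t is t'.+1 then b_at t' else 0.
Definition b_jump (t : nat) : R := b_at t - b_before t.

Lemma sum_b_jump m : \sum_(t < m.+1) b_jump t = b_at m.
Proof.
elim: m => [|m IH]; first by rewrite big_ord1 /b_jump /= subr0.
by rewrite big_ord_recr /= IH /b_jump /=; ring.
Qed.

Lemma b_threshold_decomp k : b k = \sum_(t < n) b_jump t * threshold t k.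
Proof.
rewrite (eq_bigr (fun t : 'I_n => if (t < (pi k).+1)%N then b_jump t else 0)); last first.
  by move=> t _; rewrite /threshold ltnS; case: ifP => _; rewrite ?mulr1 ?mulr0.
rewrite -big_mkcond /= -(big_ord_widen _ (fun t => b_jump t)) ?ltn_ord //.
by rewrite sum_b_jump /b_at job_at_pi.
Qed.

Lemma b_mono_le u v : (pi u <= pi v)%N -> b u <= b v.
Proof. by rewrite leq_eqVlt => /orP[|/b_mono //]; rewrite eq_pi => /eqP ->. Qed.

Lemma b_jump_ge0 (t : 'I_n) : 0 <= b_jump t.
Proof.
rewrite /b_jump /b_at job_at_ord.
case: t => [[|t] ltt] /=; first by rewrite subr0.
rewrite /b_at (job_at_ord (Ordinal (ltnW ltt))) subr_ge0 b_mono_le //.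
by rewrite !gK leqnSn.
Qed.

Lemma total_processing_threshold (s : N -> M) :
  total_processing (fun=> 1) proc pi s =
  \sum_(t < n) b_jump t * \sum_j geom q (suffix_count s t j n).
Proof.
rewrite total_processing_load.
under eq_bigr => j _ do rewrite (@load_lin b _ _ s j n b_threshold_decomp).
rewrite exchange_big /=; apply: eq_bigr => t _; rewrite mulr_sumr.
by apply: eq_bigr => j _; rewrite load_threshold.
Qed.

Section Equilibrium.
Variable s : N -> M.
Hypothesis s_min : forall i j, load b s (s i) (pi i) <= load b s j (pi i).

Local Notation L tau j := (load b s j tau).
Local Notation u t tau j := (suffix_count s t j tau).

Lemma load_job_min {tau k} : job_at tau = Some k -> forall B, L tau (s k) <= L tau B.
Proof. by move=> Etau B; rewrite -(job_at_val Etau); apply: s_min. Qed.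

Lemma NE_load_le {tau beta} : 0 <= beta -> (forall k, (pi k < tau)%N -> b k <= beta) ->
  forall A B, L tau A <= beta + q * L tau B.
Proof.
elim: tau => [|tau IH] beta_ge0 b_le A B /=; first by rewrite mulr0 addr0.
have b_le' k : (pi k < tau)%N -> b k <= beta by move=> ltk; apply: b_le; exact: ltnW.
case Etau: (job_at tau) => [k|]; last exact: IH.
have bk_le : b k <= beta by apply: b_le; rewrite (job_at_val Etau).
have := load_job_min Etau B; have := b_ge0 k; have a_ge0 := ltW a_gt0.
have := load_ge0 s A tau; have := load_ge0 s B tau; have := load_ge0 s (s k) tau.
have := IH beta_ge0 b_le' A (s k); have := IH beta_ge0 b_le' (s k) B.
by case: eqP => [<-|_]; case: eqP => [<-|_] => *; [nra | nra | nra | exact: IH].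
Qed.

Section Threshold.
Variable t : nat.
Hypotheses (lt_t_n : (t < n)%N) (b_jump_gt0 : b_before t < b_at t).

Lemma b_before_ge0 : 0 <= b_before t.
Proof. by case: t => //= t'; rewrite /b_at; case: (job_at t'). Qed.

Lemma b_before_bound k : (pi k < t)%N -> b k <= b_before t.
Proof.
case: t lt_t_n => [|t'] // ltn ltk /=.
have [k' Et'] := job_at_lt (ltnW ltn).
by rewrite /b_at Et' b_mono_le // (job_at_val Et') -ltnS.
Qed.

Lemma b_at_bound k : (t <= pi k)%N -> b_at t <= b k.
Proof.
have [kt Et] := job_at_lt lt_t_n.
by rewrite /b_at Et => letk; apply: b_mono_le; rewrite (job_at_val Et).
Qed.

(* By clauses 3 and 4, the machine receiving the next suffix job becomes
   strictly heavier than every machine that had as many suffix jobs as it, and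
   at least as heavy as every machine that had one more; this preserves
   clause 2. *)
Definition suffix_inv tau :=
  [/\ forall A B, (u t tau A <= (u t tau B).+1)%N,
      forall A B, (u t tau B < u t tau A)%N -> L tau B < L tau A,
      forall beta, (forall k, (pi k < tau)%N -> b k <= beta) -> b_at t <= beta ->
        forall A B, u t tau A = u t tau B -> L tau A < beta + q * L tau B &
      forall beta, (forall k, (pi k < tau)%N -> b k <= beta) -> b_at t <= beta ->
        forall A B, u t tau A = (u t tau B).+1 -> L tau A <= beta + q * L tau B].

Lemma suffix_inv_start : suffix_inv t.
Proof.
split=> [A B|A B|beta _ le_beta A B _|beta _ _ A B]; rewrite ?suffix_count_small //.
have := NE_load_le b_before_ge0 b_before_bound A B.
have := load_ge0 s B t; move: b_jump_gt0 le_beta; lra.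
Qed.

Lemma suffix_inv_step tau : (t <= tau < n)%N -> suffix_inv tau -> suffix_inv tau.+1.
Proof.
move=> /andP[letau lttau] [u_bal u_ord u_eq u_succ].
have [k Etau] := job_at_lt lttau.
have pk := job_at_val Etau.
have uS j : u t tau.+1 j = if s k == j then (u t tau j).+1 else u t tau j.
  by rewrite /= Etau letau andbT.
have LS j : L tau.+1 j = if s k == j then b k + q * L tau j else L tau j.
  by rewrite /= Etau.
have L_min := load_job_min Etau.
have u_min B : (u t tau (s k) <= u t tau B)%N.
  by rewrite leqNgt; apply/negP => /u_ord; have := L_min B; lra.
have bk_ge : b_at t <= b k by apply: b_at_bound; rewrite pk.
have b_le_bk k' : (pi k' < tau)%N -> b k' <= b k by move=> ltk'; apply: b_mono; rewrite pk.
have u_eq_k := u_eq (b k) b_le_bk bk_ge; have u_succ_k := u_succ (b k) b_le_bk bk_ge.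
have a_ge0 := ltW a_gt0; have bt_gt0 : 0 < b_at t by move: b_before_ge0 b_jump_gt0; lra.
have bk_ge0 := b_ge0 k; have L_ge0 j := load_ge0 s j tau.
split=> [A B|A B|beta b_le le_beta A B|beta b_le le_beta A B]; rewrite ?uS ?LS.
- have := u_bal A (s k); have := u_min A; have := u_min B.
  by case: (eqVneq (s k) A) => [<-|_]; case: (eqVneq (s k) B) => [<-|_] //; lia.
- have := u_bal A (s k); have := u_min A; have := u_min B.
  case: (eqVneq (s k) A) => [<-|_]; case: (eqVneq (s k) B) => [<-|_] //; try lia.
    by move=> leuB _ _ ltuB; apply: u_eq_k; lia.
  by move=> _ _ _; exact: u_ord.
- have b_le' k' : (pi k' < tau)%N -> b k' <= beta by move=> ltk'; apply: b_le; exact: ltnW.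
  have bk_le : b k <= beta by apply: b_le; rewrite pk.
  have := L_ge0 A; have := L_ge0 B; have := L_ge0 (s k).
  case: (eqVneq (s k) A) => [<-|_]; case: (eqVneq (s k) B) => [<-|_] //.
  + by move=> *; nra.
  + by move=> LM_ge0 LB_ge0 _ equ; have := u_ord B (s k) (ltac:(lia)); nra.
  + by move=> LM_ge0 _ LA_ge0 equ; have := u_succ_k A (s k) (ltac:(lia)); nra.
  + by move=> _ _ _; exact: u_eq.
- have b_le' k' : (pi k' < tau)%N -> b k' <= beta by move=> ltk'; apply: b_le; exact: ltnW.
  have bk_le : b k <= beta by apply: b_le; rewrite pk.
  have := L_ge0 A; have := L_ge0 B; have := L_ge0 (s k); have := L_min B.
  have := u_bal A (s k); have := u_min A; have := u_min B.
  case: (eqVneq (s k) A) => [<-|_]; case: (eqVneq (s k) B) => [<-|_] //.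
  + by lia.
  + by move=> *; nra.
  + by lia.
  + by move=> _ _ _ _ _ _ _; exact: u_succ.
Qed.

Lemma suffix_inv_all tau : (t <= tau <= n)%N -> suffix_inv tau.
Proof.
elim: tau => [|tau IH] /andP[letau letaun].
  by move: letau; rewrite leqn0 => /eqP <-; exact: suffix_inv_start.
have [<-|netau] := eqVneq t tau.+1; first exact: suffix_inv_start.
by apply: suffix_inv_step; [lia | apply: IH; lia].
Qed.

Lemma NE_suffix_count_balanced : forall A B, (u t n A <= (u t n B).+1)%N.
Proof.
have /suffix_inv_all[u_bal _ _ _] : (t <= n <= n)%N by rewrite (ltnW lt_t_n) leqnn.
exact: u_bal.
Qed.

End Threshold.
End Equilibrium.

Lemma NE_total_processing_le (s s' : N -> M) : is_NE (fun=> 1) proc pi s ->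
  total_processing (fun=> 1) proc pi s <= total_processing (fun=> 1) proc pi s'.
Proof.
move=> s_NE; rewrite !total_processing_threshold; apply: ler_sum => t _.
have := b_jump_ge0 t; rewrite le_eqVlt => /orP[/eqP <-|jump_gt0]; first by rewrite !mul0r.
apply: ler_wpM2l; first exact: ltW.
apply: sum_geom_balanced_le; first by rewrite lerDl ltW.
  have jump : b_before t < b_at t by rewrite -subr_gt0.
  exact: (@NE_suffix_count_balanced s (NE_load_min s_NE) t (ltn_ord t) jump).
exact: eq_sum_suffix_count.
Qed.

End SBPT.

Theorem lemma19 (R : realFieldType) (N M : finType) (a : R) (b : N -> R)
    (pi : N -> 'I_#|N|) :
  bijective pi ->
  0 < a ->
  (forall i, 0 <= b i) ->
  (* SBPT: higher priority implies smaller-or-equal basic processing time *)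
  (forall u v, (pi u < pi v)%N -> b u <= b v) ->
  forall sigma : N -> M,
    is_NE (fun _ => 1) (fun i t => b i + a * t) pi sigma ->
    forall sigma' : N -> M,
      total_processing (fun _ => 1) (fun i t => b i + a * t) pi sigma
      <= total_processing (fun _ => 1) (fun i t => b i + a * t) pi sigma'.
Proof.
move=> [g piK gK] a_gt0 b_ge0 b_mono sigma sigma_NE sigma'.
exact: (NE_total_processing_le piK gK a_gt0 b_ge0 b_mono sigma' sigma_NE).
Qed.
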